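(* Let $\mathcal{A}$ be a UFA with $n \ge 0$ states. Then its forward determinization has at most $\sqrt{n+1}\cdot 2^{n/2}$ states or its backward determinization has at most $\sqrt{n+1}\cdot 2^{n/2}$ states.
   Context: An NFA is a quintuple $\mathcal{A} = (Q,\Sigma,\delta,I,F)$ with $Q$ finite set of states, $\Sigma$ finite alphabet, $\delta \subseteq Q\times\Sigma\times Q$, initial states $I\subseteq Q$, accepting states $F \subseteq Q$. Write $q \xrightarrow{w} r$ if there is a run (sequence of transitions) from $q$ to $r$ reading $w$. A UFA is an NFA in which every word has at most one accepting run (run starting in $I$ and ending in $F$). For $S\subseteq Q$ and $w\in\Sigma^*$, $\delta(S,w) = \{r \mid \exists q\in S.\ q\xrightarrow{w} r\}$ and $\delta^{-1}(w,S) = \{r \mid \exists q \in S.\ r \xrightarrow{w} q\}$. The forward determinization of $\mathcal{A}$ has state set $\{\delta(I,w) \mid w\in\Sigma^*\}$ (the standard subset construction restricted to reachable subsets); the backward determinization has state set $\{\delta^{-1}(w,F)\mid w \in\Sigma^*\}$. *)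

From Stdlib Require Import Reals.
From mathcomp Require Import all_boot.
Set Implicit Arguments. Unset Strict Implicit. Unset Printing Implicit Defensive.

Section NFA.
Variables (Q Sigma : finType) (delta : Q -> Sigma -> Q -> bool).

Fixpoint is_run (q : Q) (w : seq Sigma) (qs : seq Q) : bool :=
  match w, qs with
  | [::], [::] => true
  | a :: w', q' :: qs' => delta q a q' && is_run q' w' qs'
  | _, _ => false
  end.

Definition accepting_run (I F : {set Q}) (w : seq Sigma) (q0 : Q) (qs : seq Q) : bool :=
  [&& q0 \in I, is_run q0 w qs & last q0 qs \in F].

Definition is_UFA (I F : {set Q}) : Prop :=
  forall w q0 qs q0' qs',
    accepting_run I F w q0 qs -> accepting_run I F w q0' qs' ->
    q0 = q0' /\ qs = qs'.

Definition delta_fwd (S : {set Q}) (w : seq Sigma) : {set Q} :=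
  foldl (fun (S : {set Q}) a => [set r | [exists q in S, delta q a r]]) S w.

Definition delta_bwd (w : seq Sigma) (S : {set Q}) : {set Q} :=
  foldr (fun a (S : {set Q}) => [set r | [exists q in S, delta r a q]]) S w.

End NFA.

Definition det_bound (n : nat) : R :=
  Rmult (sqrt (INR n.+1)) (Rpower 2 (Rdiv (INR n) 2)).

From Stdlib Require Import Reals Lra ClassicalEpsilon.
From mathcomp Require Import all_boot zify.
Set Implicit Arguments. Unset Strict Implicit. Unset Printing Implicit Defensive.

(* Let Xf = {delta(I, u)} and Xb = {delta^-1(v, F)} be the state sets of the
   forward and backward determinizations.  If a UFA had two states in
   delta(I, u) and delta^-1(v, F), it would have two accepting runs on u v;
   hence every member of Xf meets every member of Xb in at most one state.
   Kleitman's inequality |A| |B| <= 2^n |A n B| for down-closed families of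
   subsets of an n-set, applied to the down-closures of Xf and Xb (whose
   common members have at most one element, so there are at most n + 1 of
   them), gives |Xf| |Xb| <= 2^n (n + 1).  The smaller of the two is then at
   most sqrt(n + 1) 2^(n/2). *)

Section Kleitman.
Variable T : finType.
Implicit Types (A B : {set {set T}}) (D S U : {set T}) (x : T).

Definition down_closed A : Prop := forall S U, S \in A -> U \subset S -> U \in A.

Definition slice_out A x : {set {set T}} := [set S in A | x \notin S].

Definition slice_in A x : {set {set T}} :=
  [set S : {set T} | (x \notin S) && (x |: S \in A)].

(* The two slices partition A, up to the bijection S |-> S - x on the
   members containing x. *)

Lemma card_slices A x : #|A| = #|slice_out A x| + #|slice_in A x|.
Proof.
have splitA : A = slice_out A x :|: [set S in A | x \in S].
  by apply/setP=> S; rewrite !inE; case: (S \in A); case: (x \in S).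
rewrite {1}splitA cardsU.
have -> : slice_out A x :&: [set S in A | x \in S] = set0.
  by apply/setP=> S; rewrite !inE; case: (x \in S); rewrite ?andbF.
rewrite cards0 subn0.
rewrite -(card_in_imset (f := fun S : {set T} => x |: S) (D := slice_in A x)).
  congr (_ + _); apply: eq_card => S; rewrite inE; apply/andP/imsetP.
  - case=> SA xS; exists (S :\ x); last by rewrite setD1K.
    by rewrite inE setD11 setD1K.
  - by case=> U; rewrite inE => /andP[_ UA] ->; rewrite UA setU11.
move=> S U; rewrite !inE => /andP[xS _] /andP[xU _] eSU.
by rewrite -(setU1K xS) -(setU1K xU) eSU.
Qed.

Lemma slice_outI A B x : slice_out (A :&: B) x = slice_out A x :&: slice_out B x.
Proof. by apply/setP=> S; rewrite !inE; case: (x \in S); rewrite ?andbF ?andbT. Qed.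

Lemma slice_inI A B x : slice_in (A :&: B) x = slice_in A x :&: slice_in B x.
Proof. by apply/setP=> S; rewrite !inE; case: (x \in S). Qed.

Lemma slice_in_sub A x : down_closed A -> slice_in A x \subset slice_out A x.
Proof.
move=> dA; apply/subsetP=> S; rewrite !inE => /andP[xS xSA].
by rewrite xS andbT (dA _ _ xSA) // subsetUr.
Qed.

Lemma slice_out_down A x : down_closed A -> down_closed (slice_out A x).
Proof.
move=> dA S U; rewrite !inE => /andP[SA xS] US.
by rewrite (dA _ _ SA US) (contra (subsetP US x) xS).
Qed.

Lemma slice_in_down A x : down_closed A -> down_closed (slice_in A x).
Proof.
move=> dA S U; rewrite !inE => /andP[xS xSA] US.
by rewrite (contra (subsetP US x) xS) (dA _ _ xSA) // setUS.
Qed.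

Lemma slice_out_powerset A D x :
  A \subset powerset D -> slice_out A x \subset powerset (D :\ x).
Proof.
move=> sAD; apply/subsetP=> S; rewrite inE powersetE => /andP[SA xS].
by rewrite subsetD1 -powersetE (subsetP sAD) ?SA.
Qed.

(* The arithmetic step of Kleitman's induction (a Chebyshev-type inequality:
   (a0 - a1) (b0 - b1) >= 0). *)
Lemma mul_add_le a0 a1 b0 b1 : a1 <= a0 -> b1 <= b0 ->
  (a0 + a1) * (b0 + b1) <= 2 * (a0 * b0 + a1 * b1).
Proof. by move=> le_a le_b; nia. Qed.

Theorem kleitman n D A B : #|D| = n ->
  A \subset powerset D -> B \subset powerset D ->
  down_closed A -> down_closed B ->
  #|A| * #|B| <= 2 ^ n * #|A :&: B|.
Proof.
elim: n D A B => [|n IHn] D A B cardD sAD sBD dA dB.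
  have D0 : D = set0 by apply/eqP; rewrite -cards_eq0 cardD.
  rewrite D0 powerset0 !subset1 in sAD sBD.
  by case/orP: sAD => /eqP->; case/orP: sBD => /eqP->;
    rewrite ?setIid ?setI0 ?set0I ?cards0 ?cards1 ?muln0.
have [x xD] : exists x, x \in D by apply/card_gt0P; rewrite cardD.
have cardDx : #|D :\ x| = n by move: cardD; rewrite (cardsD1 x) xD; case.
have sub_in (C : {set {set T}}) : C \subset powerset D -> down_closed C ->
    slice_in C x \subset powerset (D :\ x).
  by move=> sCD dC; apply: subset_trans (slice_in_sub x dC) (slice_out_powerset x sCD).
have IH_out := IHn _ _ _ cardDx (slice_out_powerset x sAD) (slice_out_powerset x sBD)
  (slice_out_down (x := x) dA) (slice_out_down (x := x) dB).
have IH_in := IHn _ _ _ cardDx (sub_in _ sAD dA) (sub_in _ sBD dB)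
  (slice_in_down (x := x) dA) (slice_in_down (x := x) dB).
rewrite -slice_outI in IH_out; rewrite -slice_inI in IH_in.
rewrite (card_slices A x) (card_slices B x) (card_slices (A :&: B) x) expnS -mulnA.
apply: leq_trans (mul_add_le (subset_leq_card (slice_in_sub x dA))
                             (subset_leq_card (slice_in_sub x dB))) _.
by rewrite leq_mul2l /= mulnDr leq_add.
Qed.

End Kleitman.

Section CrossIntersecting.
Variable T : finType.
Implicit Types (X Y : {set {set T}}) (S U : {set T}).

Definition down_closure X : {set {set T}} :=
  [set U : {set T} | [exists S in X, U \subset S]].

Lemma down_closure_closed X : down_closed (down_closure X).
Proof.
move=> S U; rewrite !inE => /existsP[V /andP[VX SV]] US.
by apply/existsP; exists V; rewrite VX (subset_trans US SV).
Qed.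

Lemma down_closure_sub X : X \subset down_closure X.
Proof.
by apply/subsetP=> S SX; rewrite inE; apply/existsP; exists S; rewrite SX subxx.
Qed.

Lemma card_small_sets : #|[set U : {set T} | #|U| <= 1]| <= #|T|.+1.
Proof.
have small_sub : [set U : {set T} | #|U| <= 1] \subset set0 |: [set [set q] | q : T].
  apply/subsetP=> U; rewrite !inE leq_eqVlt ltnS leqn0.
  case/orP=> [/cards1P[q ->] | /eqP/cards0_eq ->]; last by rewrite eqxx.
  by apply/orP; right; apply/imsetP; exists q.
apply: leq_trans (subset_leq_card small_sub) _.
by rewrite cardsU1 -add1n leq_add ?leq_b1 ?leq_imset_card.
Qed.

(* Two families whose members pairwise meet in at most one element satisfy
   |X| |Y| <= 2^|T| (|T| + 1): apply Kleitman to their down-closures, whose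
   common members all have at most one element. *)
Lemma cross_intersecting_bound X Y :
  (forall S U, S \in X -> U \in Y -> #|S :&: U| <= 1) ->
  #|X| * #|Y| <= 2 ^ #|T| * #|T|.+1.
Proof.
move=> meet_le1.
have common_small :
    down_closure X :&: down_closure Y \subset [set U : {set T} | #|U| <= 1].
  apply/subsetP=> U; rewrite !inE.
  case/andP=> /existsP[S /andP[SX US]] /existsP[V /andP[VY UV]].
  by apply: leq_trans (meet_le1 _ _ SX VY); rewrite subset_leq_card // subsetI US.
have sub_all (Z : {set {set T}}) : Z \subset powerset [set: T].
  by rewrite powersetT subsetT.
have := kleitman (cardsT T) (sub_all _) (sub_all _)
  (down_closure_closed (X := X)) (down_closure_closed (X := Y)).
move/(leq_trans (leq_mul (subset_leq_card (down_closure_sub X))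
                         (subset_leq_card (down_closure_sub Y)))).
move/leq_trans; apply; rewrite leq_mul2l.
by rewrite (leq_trans (subset_leq_card common_small) card_small_sets) orbT.
Qed.

End CrossIntersecting.

Section Runs.
Variables (Q Sigma : finType) (delta : Q -> Sigma -> Q -> bool).

Lemma run_size q w qs : is_run delta q w qs -> size qs = size w.
Proof. by elim: w q qs => [|a w IHw] q [|q' qs] //= /andP[_ /IHw->]. Qed.

Lemma run_cat q u v qs qs' :
  is_run delta q u qs -> is_run delta (last q qs) v qs' ->
  is_run delta q (u ++ v) (qs ++ qs').
Proof.
by elim: u q qs => [|a u IHu] q [|q1 qs] //= /andP[-> /IHu run_u] /run_u.
Qed.

Lemma mem_delta_fwd S w q : q \in delta_fwd delta S w ->
  exists q0 qs, [/\ q0 \in S, is_run delta q0 w qs & last q0 qs = q].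
Proof.
elim: w S => [|a w IHw] S /=; first by exists q, [::].
case/IHw=> q1 [qs [+ run_w <-]]; rewrite inE => /existsP[q0 /andP[q0S step]].
by exists q0, (q1 :: qs); rewrite /= step run_w.
Qed.

Lemma mem_delta_bwd S w q : q \in delta_bwd delta w S ->
  exists qs, is_run delta q w qs /\ last q qs \in S.
Proof.
elim: w q => [|a w IHw] q /=; first by exists [::].
rewrite inE => /existsP[q1 /andP[/IHw[qs [run_w last_S]] step]].
by exists (q1 :: qs); rewrite /= step run_w.
Qed.

(* In a UFA, delta(I, u) and delta^-1(v, F) share at most one state: two
   common states would give two accepting runs on u v that differ after u. *)
Lemma UFA_fwd_bwd_meet I F u v : is_UFA delta I F ->
  #|delta_fwd delta I u :&: delta_bwd delta v F| <= 1.
Proof.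
move=> ufa; apply/card_le1_eqP => q q'.
rewrite !inE => /andP[/mem_delta_fwd[q0 [qs [q0I run_u <-]]]
                      /mem_delta_bwd[ps [run_v lastF]]].
case/andP=> /mem_delta_fwd[q0' [qs' [q0I' run_u' <-]]]
            /mem_delta_bwd[ps' [run_v' lastF']].
have acc : accepting_run delta I F (u ++ v) q0 (qs ++ ps).
  by rewrite /accepting_run q0I run_cat // last_cat.
have acc' : accepting_run delta I F (u ++ v) q0' (qs' ++ ps').
  by rewrite /accepting_run q0I' run_cat // last_cat.
have [<- eq_runs] := ufa _ _ _ _ _ acc acc'.
have same_size : size qs = size qs' by rewrite (run_size run_u) (run_size run_u').
have := congr1 (take (size qs)) eq_runs.
by rewrite take_size_cat // take_size_cat // => ->.
Qed.

End Runs.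

Section DetBound.
Local Open Scope R_scope.

Lemma INR_expn2 n : INR (2 ^ n) = pow 2 n.
Proof. by elim: n => [|n IHn] //; rewrite expnS mult_INR IHn /=. Qed.

Lemma det_bound_sqr n : det_bound n * det_bound n = pow 2 n * INR n.+1.
Proof.
rewrite /det_bound.
have -> : forall a b : R, a * b * (a * b) = (a * a) * (b * b) by move=> a b; ring.
rewrite sqrt_sqrt; last exact: pos_INR.
rewrite -Rpower_plus.
have -> : INR n / 2 + INR n / 2 = INR n by field.
by rewrite Rpower_pow; [ring | lra].
Qed.

Lemma le_det_bound m n : (m * m <= 2 ^ n * n.+1)%N -> INR m <= det_bound n.
Proof.
move=> /leP /le_INR; rewrite !mult_INR INR_expn2 -det_bound_sqr => sq_le.
have bound_ge0 : 0 <= det_bound n.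
  by apply: Rmult_le_pos; [exact: sqrt_pos | left; exact: exp_pos].
have := pos_INR m; nra.
Qed.

End DetBound.

(* A classical boolean decision of a proposition, used to form the (finite)
   sets of reachable subsets. *)
Definition decide (P : Prop) : bool :=
  if excluded_middle_informative P then true else false.

Lemma decideP (P : Prop) : reflect P (decide P).
Proof. by rewrite /decide; case: excluded_middle_informative; constructor. Qed.

Lemma min_sqr_le a b N : a * b <= N -> minn a b * minn a b <= N.
Proof. by move=> le_ab; apply: leq_trans le_ab; rewrite leq_mul ?geq_minl ?geq_minr. Qed.

Theorem mainTheorem2 (Q Sigma : finType) (delta : Q -> Sigma -> Q -> bool)
  (I F : {set Q}) :
  is_UFA delta I F ->
  (exists X : {set {set Q}},
     (forall S, S \in X <-> exists w, S = delta_fwd delta I w) /\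
     Rle (INR #|X|) (det_bound #|Q|)) \/
  (exists X : {set {set Q}},
     (forall S, S \in X <-> exists w, S = delta_bwd delta w F) /\
     Rle (INR #|X|) (det_bound #|Q|)).
Proof.
move=> ufa.
set Xf := [set S | decide (exists w, S = delta_fwd delta I w)].
set Xb := [set S | decide (exists w, S = delta_bwd delta w F)].
have memXf S : S \in Xf <-> exists w, S = delta_fwd delta I w.
  by rewrite inE; exact: iff_sym (rwP (decideP _)).
have memXb S : S \in Xb <-> exists w, S = delta_bwd delta w F.
  by rewrite inE; exact: iff_sym (rwP (decideP _)).
have prod_le : #|Xf| * #|Xb| <= 2 ^ #|Q| * #|Q|.+1.
  apply: cross_intersecting_bound => S U /memXf[u ->] /memXb[v ->].
  exact: UFA_fwd_bwd_meet.
have := le_det_bound (min_sqr_le prod_le).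
by case: (leqP #|Xf| #|Xb|) => _ bound; [left; exists Xf | right; exists Xb].
Qed.
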